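(* There exists a constant $\hat C_0>0$, depending only on $m,\alpha,\beta$, such that the following holds. Let $T>0$, let $(\hat u,\hat v)$ be a smooth solution of the NLDE on $\mathbb{R}\times[0,T]$ with $\mathcal{M}_0=\max_{\mathbb{R}\times[0,T]}(|\hat u|+|\hat v|+1)<\infty$, let $\tau>0$ and let $(u^{(\tau)},v^{(\tau)})$ be a time-splitting solution with mesh $\tau$. Then for all $j\in\mathbb{Z}$, all integers $n\ge0$ with $(n+1)\tau\le T$ and all $s\in[0,\tau)$, $$|\hat u(j\tau+s,n\tau+s)-u^{(\tau)}(j\tau+s,n\tau+s)|^2+|\hat v((j+2)\tau-s,n\tau+s)-v^{(\tau)}((j+2)\tau-s,n\tau+s)|^2$$ $$\le e^{2\tau}\Big(|\hat u(j\tau,n\tau)-u_j^n|^2+|\hat v((j+2)\tau,n\tau)-v_{j+2}^n|^2+\hat C_0\mathcal{M}_0^6\tau\Big).$$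
   Context: Fix constants $m\ge 0$ and $\alpha,\beta\in\mathbb{R}$. The NLDE for $(u,v):\mathbb{R}\times[0,T]\to\mathbb{C}^2$ is $u_t+u_x=imv+i\alpha u|v|^2+2i\beta(\bar u v+u\bar v)v$, $v_t-v_x=imu+i\alpha v|u|^2+2i\beta(\bar u v+u\bar v)u$. Let (N) denote the ODE system on $\mathbb{C}^2$: $\frac{du}{ds}=imv+i\alpha u|v|^2+2i\beta(\bar u v+u\bar v)v$, $\frac{dv}{ds}=imu+i\alpha v|u|^2+2i\beta(\bar u v+u\bar v)u$. Time-splitting scheme with mesh $\tau>0$: given $(u_j^0,v_j^0)_{j\in\mathbb{Z}}\subset\mathbb{C}^2$ with $\sum_j(|u_j^0|^2+|v_j^0|^2)<\infty$, set $(u^{(\tau)},v^{(\tau)})(x,0)=(u_j^0,v_j^0)$ for $x\in[j\tau,(j+1)\tau)$. Inductively, once $(u^{(\tau)},v^{(\tau)})(\cdot,n\tau)$ is defined, set for $t\in[n\tau,(n+1)\tau)$: $u^{(\tau)}(x,t)=u^{(\tau)}(x-(t-n\tau),n\tau)$, $v^{(\tau)}(x,t)=v^{(\tau)}(x+(t-n\tau),n\tau)$; let $(u^{(\tau)},v^{(\tau)})(x,(n+1)\tau-)$ be the left limit in $t$; and for each $x$ define $(u^{(\tau)},v^{(\tau)})(x,(n+1)\tau)$ as the value at $s=\tau$ of the solution of (N) with value $(u^{(\tau)},v^{(\tau)})(x,(n+1)\tau-)$ at $s=0$ (this is globally well defined). Notation: $(u_j^n,v_j^n)=(u^{(\tau)},v^{(\tau)})(j\tau,n\tau)$.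 *)

From Stdlib Require Import Reals ZArith.
From Coquelicot Require Import Coquelicot.

Open Scope R_scope.

Definition NLu (m al be : R) (u v : C) : C :=
  (Ci * RtoC m * v + Ci * RtoC al * u * RtoC (Cmod v ^ 2)
   + 2 * Ci * RtoC be * (Cconj u * v + u * Cconj v) * v)%C.

Definition NLv (m al be : R) (u v : C) : C :=
  (Ci * RtoC m * u + Ci * RtoC al * v * RtoC (Cmod u ^ 2)
   + 2 * Ci * RtoC be * (Cconj u * v + u * Cconj v) * u)%C.

(* (uh, vh) is a smooth (here: differentiable as a function of (x,t)) solution
   of the NLDE  u_t + u_x = NLu, v_t - v_x = NLv  on R x [0,T]. *)
Definition NLDE_solution (m al be T : R) (uh vh : R -> R -> C) : Prop :=
  forall x t, 0 <= t <= T ->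
    ex_filterdiff (fun p : R * R => uh (fst p) (snd p)) (locally (x, t)) /\
    ex_filterdiff (fun p : R * R => vh (fst p) (snd p)) (locally (x, t)) /\
    exists ux ut vx vt : C,
      is_derive (fun y => uh y t) x ux /\ is_derive (fun s => uh x s) t ut /\
      is_derive (fun y => vh y t) x vx /\ is_derive (fun s => vh x s) t vt /\
      (ut + ux)%C = NLu m al be (uh x t) (vh x t) /\
      (vt - vx)%C = NLv m al be (uh x t) (vh x t).

Definition ODE_N_solution (m al be : R) (w : R -> C * C) : Prop :=
  forall s, is_derive w s (NLu m al be (fst (w s)) (snd (w s)),
                           NLv m al be (fst (w s)) (snd (w s))).

Definition time_splitting (m al be tau : R) (U V : R -> R -> C) : Prop :=
  exists u0 v0 : Z -> C,
    (* square summable initial data *)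
    ex_series (fun k : nat =>
      Cmod (u0 (Z.of_nat k)) ^ 2 + Cmod (v0 (Z.of_nat k)) ^ 2
      + Cmod (u0 (- Z.of_nat k - 1)%Z) ^ 2 + Cmod (v0 (- Z.of_nat k - 1)%Z) ^ 2) /\
    (forall (j : Z) (x : R), IZR j * tau <= x < (IZR j + 1) * tau ->
        U x 0 = u0 j /\ V x 0 = v0 j) /\
    (forall (n : nat) (x t : R), INR n * tau <= t < (INR n + 1) * tau ->
        U x t = U (x - (t - INR n * tau)) (INR n * tau) /\
        V x t = V (x + (t - INR n * tau)) (INR n * tau)) /\
    (* at t = (n+1) tau: apply the time-tau flow of (N) to the left limit *)
    (forall (n : nat) (x : R), exists a b : C,
        filterlim (fun t => (U x t, V x t)) (at_left ((INR n + 1) * tau))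
                  (locally (a, b)) /\
        exists w : R -> C * C, ODE_N_solution m al be w /\
          w 0 = (a, b) /\ w tau = (U x ((INR n + 1) * tau), V x ((INR n + 1) * tau))).

(* Before the ODE step at [(n+1) tau] the splitting solution is pure transport, so along
   the characteristic [x = x0 + s, t = t0 + s] the numerical [u] is constant, while the
   exact [u] moves with speed [|NLu| <= c M0^3] (likewise for [v] along [x = x3 - s]).
   Each error therefore grows by at most [2 c M0^3 s]; squaring with AM-GM,
   [(p + 2 K s)^2 <= (1 + s) p^2 + 4 K^2 (s + s^2)], and [1 + 2 tau <= exp (2 tau)]
   give the estimate. *)
From Stdlib Require Import Reals Lra Psatz.
From Coquelicot Require Import Coquelicot.
Open Scope R_scope.

Lemma is_derive_C_fst (g : R -> C) x l :
  is_derive g x l -> is_derive (fun y => fst (g y)) x (fst l).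
Proof.
intros H; unfold is_derive in *.
eapply filterdiff_ext_lin.
- apply (filterdiff_comp' g (fun p : C => fst p) x (fun y : R => scal y l)); [exact H|].
  apply filterdiff_linear, (@is_linear_fst R_AbsRing R_NormedModule R_NormedModule).
- intros y; destruct l; reflexivity.
Qed.

Lemma is_derive_C_snd (g : R -> C) x l :
  is_derive g x l -> is_derive (fun y => snd (g y)) x (snd l).
Proof.
intros H; unfold is_derive in *.
eapply filterdiff_ext_lin.
- apply (filterdiff_comp' g (fun p : C => snd p) x (fun y : R => scal y l)); [exact H|].
  apply filterdiff_linear, (@is_linear_snd R_AbsRing R_NormedModule R_NormedModule).
- intros y; destruct l; reflexivity.
Qed.

Lemma is_derive_C_unique (g : R -> C) x l1 l2 :
  is_derive g x l1 -> is_derive g x l2 -> l1 = l2.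
Proof.
intros H1 H2; destruct l1 as [a b], l2 as [c d].
apply is_derive_C_fst in H1 as F1; apply is_derive_C_fst in H2 as F2.
apply is_derive_C_snd in H1 as S1; apply is_derive_C_snd in H2 as S2.
apply is_derive_unique in F1, F2, S1, S2; simpl in *; congruence.
Qed.

Local Notation R2 := (prod_NormedModule R_AbsRing R_NormedModule R_NormedModule).

Lemma filterdiff_line (a b c d r0 : R) :
  filterdiff (fun r : R => ((a + c * r, b + d * r) : R2)) (locally r0)
             (fun h : R => ((c * h, d * h) : R2)).
Proof.
apply (filterdiff_ext (fun r : R => plus ((a, b) : R2) ((c * r, d * r) : R2))); [reflexivity|].
apply (filterdiff_ext_lin _ (fun h : R => plus (zero : R2) ((c * h, d * h) : R2))).
- apply (@filterdiff_plus_fct R_AbsRing R_NormedModule R2 (locally r0) _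
           (fun _ => (a, b)) (fun r => (c * r, d * r)) (fun _ => zero) (fun h => (c * h, d * h)));
    [apply filterdiff_const | apply filterdiff_linear].
  apply (is_linear_ext (fun h : R => ((scal c h, scal d h) : R2))); [reflexivity|].
  apply is_linear_prod; apply (@is_linear_scal_r R_AbsRing R_NormedModule);
    intros; apply Rmult_comm.
- intros y; apply plus_zero_l.
Qed.

Lemma filterdiff_comp_line (f : R -> R -> C) (L : R2 -> C) a b c d r0 :
  filterdiff (fun p : R2 => f (fst p) (snd p)) (locally ((a + c * r0, b + d * r0) : R2)) L ->
  filterdiff (fun r : R => f (a + c * r) (b + d * r)) (locally r0)
             (fun h : R => L ((c * h, d * h) : R2)).
Proof.
intros H.
apply (filterdiff_comp' (fun r : R => ((a + c * r, b + d * r) : R2))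
                        (fun p : R2 => f (fst p) (snd p))); [apply filterdiff_line | exact H].
Qed.

Lemma is_derive_comp_line (f : R -> R -> C) (L : R2 -> C) a b c d r0 :
  filterdiff (fun p : R2 => f (fst p) (snd p)) (locally ((a + c * r0, b + d * r0) : R2)) L ->
  is_derive (fun r => f (a + c * r) (b + d * r)) r0
            (RtoC c * L ((1, 0) : R2) + RtoC d * L ((0, 1) : R2))%C.
Proof.
intros HL; pose proof (proj1 HL) as Hlin.
unfold is_derive; eapply filterdiff_ext_lin; [exact (filterdiff_comp_line f L a b c d r0 HL)|].
intros h; simpl.
assert (Hch : ((c * h, d * h) : R2) = plus (scal (c * h) ((1, 0) : R2)) (scal (d * h) ((0, 1) : R2))).
{ apply injective_projections; simpl; unfold plus, scal; simpl; unfold mult, plus; simpl; ring. }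
rewrite Hch, (linear_plus _ Hlin), !(linear_scal _ Hlin).
destruct (L (1, 0)), (L (0, 1)).
apply injective_projections; simpl; unfold plus, scal; simpl; unfold mult, plus; simpl; ring.
Qed.

Lemma filterdiff_partials (f : R -> R -> C) (L : R2 -> C) x t ux ut :
  filterdiff (fun p : R2 => f (fst p) (snd p)) (locally ((x, t) : R2)) L ->
  is_derive (fun y => f y t) x ux ->
  is_derive (fun s => f x s) t ut ->
  L ((1, 0) : R2) = ux /\ L ((0, 1) : R2) = ut.
Proof.
intros HL Hx Ht; split.
- apply (is_derive_C_unique (fun y => f y t) x); [|exact Hx].
  assert (E : ((0 + 1 * x, t + 0 * x) : R2) = (x, t)) by (apply injective_projections; simpl; ring).
  rewrite <- E in HL; pose proof (is_derive_comp_line f L 0 t 1 0 x HL) as D.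
  replace (RtoC 1 * _ + _)%C with (L ((1, 0) : R2)) in D by ring.
  eapply is_derive_ext; [|exact D]; intros y; simpl; f_equal; ring.
- apply (is_derive_C_unique (fun s => f x s) t); [|exact Ht].
  assert (E : ((x + 0 * t, 0 + 1 * t) : R2) = (x, t)) by (apply injective_projections; simpl; ring).
  rewrite <- E in HL; pose proof (is_derive_comp_line f L x 0 0 1 t HL) as D.
  replace (RtoC 0 * _ + _)%C with (L ((0, 1) : R2)) in D by ring.
  eapply is_derive_ext; [|exact D]; intros y; simpl; f_equal; ring.
Qed.

Lemma is_derive_comp_line_partials (f : R -> R -> C) a b c d r0 ux ut :
  ex_filterdiff (fun p : R * R => f (fst p) (snd p)) (locally (a + c * r0, b + d * r0)) ->
  is_derive (fun y => f y (b + d * r0)) (a + c * r0) ux ->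
  is_derive (fun s => f (a + c * r0) s) (b + d * r0) ut ->
  is_derive (fun r => f (a + c * r) (b + d * r)) r0 (RtoC c * ux + RtoC d * ut)%C.
Proof.
intros [L HL] Hx Ht.
destruct (filterdiff_partials f L _ _ ux ut HL Hx Ht) as [<- <-].
exact (is_derive_comp_line f L a b c d r0 HL).
Qed.

Lemma NLDE_is_derive_u_characteristic m al be T uh vh x t r :
  NLDE_solution m al be T uh vh -> 0 <= t + r <= T ->
  is_derive (fun r => uh (x + r) (t + r)) r
            (NLu m al be (uh (x + r) (t + r)) (vh (x + r) (t + r))).
Proof.
intros Hsol Htr.
destruct (Hsol (x + 1 * r) (t + 1 * r)) as [Hf [_ [ux [ut [_ [_ [Hux [Hut [_ [_ [Heq _]]]]]]]]]]];
  [lra|].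
pose proof (is_derive_comp_line_partials uh x t 1 1 r ux ut Hf Hux Hut) as D.
replace (RtoC 1 * ux + RtoC 1 * ut)%C with (ut + ux)%C in D by ring.
rewrite Heq in D; rewrite !Rmult_1_l in D.
eapply is_derive_ext; [|exact D]; intros y; simpl; rewrite !Rmult_1_l; reflexivity.
Qed.

Lemma NLDE_is_derive_v_characteristic m al be T uh vh x t r :
  NLDE_solution m al be T uh vh -> 0 <= t + r <= T ->
  is_derive (fun r => vh (x - r) (t + r)) r
            (NLv m al be (uh (x - r) (t + r)) (vh (x - r) (t + r))).
Proof.
intros Hsol Htr.
destruct (Hsol (x + -1 * r) (t + 1 * r)) as [_ [Hf [ux [ut [vx [vt [_ [_ [Hvx [Hvt [_ Heq]]]]]]]]]]];
  [lra|].
pose proof (is_derive_comp_line_partials vh x t (-1) 1 r vx vt Hf Hvx Hvt) as D.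
replace (RtoC (-1) * vx + RtoC 1 * vt)%C with (vt - vx)%C in D by (apply injective_projections; simpl; ring).
rewrite Heq in D; replace (x + -1 * r) with (x - r) in D by ring; rewrite Rmult_1_l in D.
eapply is_derive_ext; [|exact D]; intros y; simpl; f_equal; ring.
Qed.

Lemma Rabs_sub_le_of_derive_bound (h dh : R -> R) a b K : a <= b ->
  (forall r, a <= r <= b -> is_derive h r (dh r)) ->
  (forall r, a <= r <= b -> Rabs (dh r) <= K) ->
  Rabs (h b - h a) <= K * (b - a).
Proof.
intros Hab Hd HK.
destruct (MVT_abs h dh a b) as [c [-> Hc]].
- intros c Hc; rewrite Rmin_left, Rmax_right in Hc by lra.
  apply is_derive_Reals, Hd, Hc.
- rewrite Rmin_left, Rmax_right in Hc by lra.
  rewrite (Rabs_right (b - a)) by lra.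
  apply Rmult_le_compat_r; [lra | apply HK, Hc].
Qed.

(* Componentwise mean value theorem; [Cmod z <= sqrt 2 * max |Re z| |Im z|] costs the factor 2. *)
Lemma Cmod_sub_le_of_derive_bound (g dg : R -> C) a b K : a <= b ->
  (forall r, a <= r <= b -> is_derive g r (dg r)) ->
  (forall r, a <= r <= b -> Cmod (dg r) <= K) ->
  Cmod (g b - g a)%C <= 2 * K * (b - a).
Proof.
intros Hab Hd HK.
assert (HRe : Rabs (fst (g b) - fst (g a)) <= K * (b - a)).
{ apply (Rabs_sub_le_of_derive_bound (fun r => fst (g r)) (fun r => fst (dg r))); [lra | |].
  - intros r Hr; apply is_derive_C_fst, Hd, Hr.
  - intros r Hr; eapply Rle_trans; [apply re_le_Cmod | apply HK, Hr]. }
assert (HIm : Rabs (snd (g b) - snd (g a)) <= K * (b - a)).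
{ apply (Rabs_sub_le_of_derive_bound (fun r => snd (g r)) (fun r => snd (dg r))); [lra | |].
  - intros r Hr; apply is_derive_C_snd, Hd, Hr.
  - intros r Hr; eapply Rle_trans; [|apply HK, Hr].
    eapply Rle_trans; [apply Rmax_r | apply Rmax_Cmod]. }
assert (Hmax : Rmax (Rabs (fst (g b - g a)%C)) (Rabs (snd (g b - g a)%C)) <= K * (b - a))
  by (apply Rmax_lub; assumption).
assert (Hmax0 : 0 <= Rmax (Rabs (fst (g b - g a)%C)) (Rabs (snd (g b - g a)%C)))
  by (eapply Rle_trans; [apply Rabs_pos | apply Rmax_l]).
assert (Hsqrt2 : sqrt 2 * sqrt 2 = 2) by (apply sqrt_sqrt; lra).
pose proof (sqrt_pos 2).
eapply Rle_trans; [apply Cmod_2Rmax | nra].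
Qed.

Lemma Cmod_dist_le_of_derive_bound (g dg : R -> C) s K A : 0 <= s ->
  (forall r, 0 <= r <= s -> is_derive g r (dg r)) ->
  (forall r, 0 <= r <= s -> Cmod (dg r) <= K) ->
  Cmod (g s - A)%C <= Cmod (g 0 - A)%C + 2 * K * s.
Proof.
intros Hs Hd HK.
replace (g s - A)%C with ((g 0 - A) + (g s - g 0))%C by ring.
eapply Rle_trans; [apply Cmod_triangle|].
apply Rplus_le_compat_l.
replace (2 * K * s) with (2 * K * (s - 0)) by ring.
apply (Cmod_sub_le_of_derive_bound g dg); assumption.
Qed.

Definition NL_growth (m al be : R) : R := m + Rabs al + 4 * Rabs be.

Lemma Cmod_NLu_le m al be u v M : 0 <= m -> 1 <= M -> Cmod u <= M -> Cmod v <= M ->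
  Cmod (NLu m al be u v) <= NL_growth m al be * M ^ 3.
Proof.
intros Hm HM Hu Hv; unfold NLu, NL_growth.
pose proof (Cmod_ge_0 u); pose proof (Cmod_ge_0 v).
pose proof (Rabs_pos al); pose proof (Rabs_pos be).
assert (Huv : Cmod u * Cmod v <= M ^ 2) by (simpl; apply Rmult_le_compat; nra).
assert (Hlin : Cmod (Ci * m * v)%C <= m * M ^ 3).
{ rewrite !Cmod_mult, Cmod_Ci, Cmod_R, Rabs_right by lra.
  assert (M <= M ^ 3) by nra; nra. }
assert (Hcub : Cmod (Ci * al * u * RtoC (Cmod v ^ 2))%C <= Rabs al * M ^ 3).
{ rewrite !Cmod_mult, Cmod_Ci, !Cmod_R, (Rabs_right (Cmod v ^ 2)) by nra.
  assert (Cmod u * Cmod v ^ 2 <= M ^ 3) by (simpl; apply Rmult_le_compat; nra).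
  nra. }
assert (Hcross : Cmod (Cconj u * v + u * Cconj v)%C <= 2 * M ^ 2).
{ eapply Rle_trans; [apply Cmod_triangle|].
  rewrite !Cmod_mult, !Cmod_conj; nra. }
assert (Hquad : Cmod (2 * Ci * be * (Cconj u * v + u * Cconj v) * v)%C <= 4 * Rabs be * M ^ 3).
{ rewrite !Cmod_mult, Cmod_Ci, !Cmod_R, Rabs_right by lra.
  pose proof (Cmod_ge_0 (Cconj u * v + u * Cconj v)%C).
  assert (Cmod (Cconj u * v + u * Cconj v)%C * Cmod v <= 2 * M ^ 2 * M)
    by (apply Rmult_le_compat; nra).
  nra. }
eapply Rle_trans; [apply Cmod_triangle|].
eapply Rle_trans; [apply Rplus_le_compat_r, Cmod_triangle|].
nra.
Qed.

Lemma NLv_eq_NLu_swap m al be u v : NLv m al be u v = NLu m al be v u.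
Proof. unfold NLu, NLv; ring. Qed.

Lemma time_splitting_transport m al be tau U V (n : nat) x s :
  time_splitting m al be tau U V -> 0 <= s < tau ->
  U (x + s) (INR n * tau + s) = U x (INR n * tau) /\
  V (x - s) (INR n * tau + s) = V x (INR n * tau).
Proof.
intros [u0 [v0 [_ [_ [Htr _]]]]] Hs.
destruct (Htr n (x + s) (INR n * tau + s)) as [HU _]; [lra|].
destruct (Htr n (x - s) (INR n * tau + s)) as [_ HV]; [lra|].
replace (x + s - (INR n * tau + s - INR n * tau)) with x in HU by ring.
replace (x - s + (INR n * tau + s - INR n * tau)) with x in HV by ring.
split; assumption.
Qed.

Lemma sqr_le_of_le_add_drift p a K s : 0 <= s -> 0 <= p -> 0 <= a ->
  a <= p + 2 * K * s -> a ^ 2 <= (1 + s) * p ^ 2 + 4 * K ^ 2 * (s + s ^ 2).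
Proof.
intros Hs Hp Ha Hap.
assert (Hamgm : 0 <= s * (p - 2 * K) ^ 2) by (apply Rmult_le_pos; [lra | apply pow2_ge_0]).
nra.
Qed.

Lemma sum_sqr_le_exp_of_drift p1 p2 a b K s tau : 0 <= s < tau ->
  0 <= p1 -> 0 <= p2 -> 0 <= a -> 0 <= b ->
  a <= p1 + 2 * K * s -> b <= p2 + 2 * K * s ->
  a ^ 2 + b ^ 2 <= exp (2 * tau) * (p1 ^ 2 + p2 ^ 2 + 8 * K ^ 2 * tau).
Proof.
intros Hs Hp1 Hp2 Ha Hb Hap Hbp.
pose proof (sqr_le_of_le_add_drift p1 a K s ltac:(lra) Hp1 Ha Hap).
pose proof (sqr_le_of_le_add_drift p2 b K s ltac:(lra) Hp2 Hb Hbp).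
assert (Hexp : 1 + 2 * tau <= exp (2 * tau)) by (pose proof (exp_ineq1 (2 * tau)); lra).
assert (HK2 : 0 <= K ^ 2) by apply pow2_ge_0.
assert (Hss : s + s ^ 2 <= tau * (1 + tau)) by nra.
assert (HP : 0 <= p1 ^ 2 + p2 ^ 2) by nra.
assert (Hdata : (1 + s) * (p1 ^ 2 + p2 ^ 2) <= exp (2 * tau) * (p1 ^ 2 + p2 ^ 2))
  by (apply Rmult_le_compat_r; lra).
assert (Hdrift : 8 * K ^ 2 * (s + s ^ 2) <= exp (2 * tau) * (8 * K ^ 2 * tau)).
{ apply Rle_trans with (8 * K ^ 2 * tau * (1 + tau)); [nra|].
  rewrite (Rmult_comm (exp _)); apply Rmult_le_compat_l; nra. }
nra.
Qed.

Section CharacteristicDrift.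

Variables (m al be T M : R) (uh vh : R -> R -> C).
Hypothesis Hm : 0 <= m.
Hypothesis Hsol : NLDE_solution m al be T uh vh.
Hypothesis Hbound : forall x t, 0 <= t <= T -> Cmod (uh x t) + Cmod (vh x t) + 1 <= M.

Lemma Cmod_NL_on_strip x t : 0 <= t <= T ->
  Cmod (NLu m al be (uh x t) (vh x t)) <= NL_growth m al be * M ^ 3 /\
  Cmod (NLv m al be (uh x t) (vh x t)) <= NL_growth m al be * M ^ 3.
Proof.
intros Ht; pose proof (Hbound x t Ht).
pose proof (Cmod_ge_0 (uh x t)); pose proof (Cmod_ge_0 (vh x t)).
rewrite NLv_eq_NLu_swap.
split; apply Cmod_NLu_le; lra.
Qed.

Lemma NLDE_u_drift x t s A : 0 <= t -> 0 <= s -> t + s <= T ->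
  Cmod (uh (x + s) (t + s) - A)%C
  <= Cmod (uh x t - A)%C + 2 * (NL_growth m al be * M ^ 3) * s.
Proof.
intros Ht Hs HtsT.
rewrite <- (Rplus_0_r x) at 2; rewrite <- (Rplus_0_r t) at 2.
apply (Cmod_dist_le_of_derive_bound (fun r => uh (x + r) (t + r))
         (fun r => NLu m al be (uh (x + r) (t + r)) (vh (x + r) (t + r)))); [lra | |].
- intros r Hr; apply (NLDE_is_derive_u_characteristic _ _ _ T); [exact Hsol | lra].
- intros r Hr; apply Cmod_NL_on_strip; lra.
Qed.

Lemma NLDE_v_drift x t s A : 0 <= t -> 0 <= s -> t + s <= T ->
  Cmod (vh (x - s) (t + s) - A)%C
  <= Cmod (vh x t - A)%C + 2 * (NL_growth m al be * M ^ 3) * s.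
Proof.
intros Ht Hs HtsT.
rewrite <- (Rminus_0_r x) at 2; rewrite <- (Rplus_0_r t) at 2.
apply (Cmod_dist_le_of_derive_bound (fun r => vh (x - r) (t + r))
         (fun r => NLv m al be (uh (x - r) (t + r)) (vh (x - r) (t + r)))); [lra | |].
- intros r Hr; apply (NLDE_is_derive_v_characteristic _ _ _ T); [exact Hsol | lra].
- intros r Hr; apply Cmod_NL_on_strip; lra.
Qed.

End CharacteristicDrift.

Theorem lemma4p1 :
  forall m al be : R, 0 <= m ->
  exists C0 : R, 0 < C0 /\
  forall (T : R) (uh vh : R -> R -> C) (M0 : R),
    0 < T ->
    NLDE_solution m al be T uh vh ->
    (* M0 = max over R x [0,T] of |uh| + |vh| + 1 (finite) *)
    (forall x t, 0 <= t <= T -> Cmod (uh x t) + Cmod (vh x t) + 1 <= M0) ->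
    (forall M, (forall x t, 0 <= t <= T -> Cmod (uh x t) + Cmod (vh x t) + 1 <= M) ->
       M0 <= M) ->
    forall (tau : R) (U V : R -> R -> C),
    0 < tau ->
    time_splitting m al be tau U V ->
    forall (j : Z) (n : nat) (s : R),
      (INR n + 1) * tau <= T ->
      0 <= s < tau ->
      let x1 := IZR j * tau + s in
      let x2 := (IZR j + 2) * tau - s in
      let t1 := INR n * tau + s in
      let x0 := IZR j * tau in
      let x3 := (IZR j + 2) * tau in
      let t0 := INR n * tau in
      Cmod (uh x1 t1 - U x1 t1)%C ^ 2 + Cmod (vh x2 t1 - V x2 t1)%C ^ 2
      <= exp (2 * tau) *
         (Cmod (uh x0 t0 - U x0 t0)%C ^ 2 + Cmod (vh x3 t0 - V x3 t0)%C ^ 2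
          + C0 * M0 ^ 6 * tau).
Proof.
intros m al be Hm.
set (c := NL_growth m al be).
assert (Hc : 0 <= c) by (unfold c, NL_growth; pose proof (Rabs_pos al); pose proof (Rabs_pos be); lra).
exists (8 * c ^ 2 + 1); split; [nra|].
intros T uh vh M0 HT Hsol Hbound _ tau U V Htau Hts j n s Hn Hs; cbv zeta.
destruct (time_splitting_transport _ _ _ _ _ _ n (IZR j * tau) s Hts Hs) as [-> _].
destruct (time_splitting_transport _ _ _ _ _ _ n ((IZR j + 2) * tau) s Hts Hs) as [_ ->].
assert (Ht0 : 0 <= INR n * tau) by (pose proof (pos_INR n); nra).
eapply Rle_trans.
- apply (sum_sqr_le_exp_of_drift (Cmod (uh (IZR j * tau) (INR n * tau) - U (IZR j * tau) (INR n * tau)))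
           (Cmod (vh ((IZR j + 2) * tau) (INR n * tau) - V ((IZR j + 2) * tau) (INR n * tau)))
           _ _ (c * M0 ^ 3) s tau Hs); try apply Cmod_ge_0.
  + apply (NLDE_u_drift m al be T M0 uh vh Hm Hsol Hbound); lra.
  + apply (NLDE_v_drift m al be T M0 uh vh Hm Hsol Hbound); lra.
- assert (HM0 : 1 <= M0 ^ 6).
  { apply pow_R1_Rle; pose proof (Hbound 0 0 ltac:(lra)).
    pose proof (Cmod_ge_0 (uh 0 0)); pose proof (Cmod_ge_0 (vh 0 0)); lra. }
  apply Rmult_le_compat_l; [left; apply exp_pos|].
  replace ((c * M0 ^ 3) ^ 2) with (c ^ 2 * M0 ^ 6) by ring.
  nra.
Qed.
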